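(* Let $G$ be a looped simple graph and let $T_1,T_2$ be disjoint transversals of $W(G)$ with $r(T_1)+r(T_2)=|V(G)|$, where $r$ is the rank function of $M[IAS(G)]$. Let $T_3=W(G)\setminus(T_1\cup T_2)$, and for $i\in\{1,2,3\}$ let $M_i$ be the binary matroid on $V(G)$ obtained from $M[IAS(G)]|T_i$ via the bijection $T_i\to V(G)$ sending the element of $T_i$ in the vertex triple of $v$ to $v$. Then $M_1$ and $M_2$ have the same bicycle space, and this bicycle space equals the cycle space of $M_3$.
   Context: A looped simple graph is a finite graph in which each vertex carries at most one loop and no two distinct vertices are joined by more than one edge; ''adjacent'' refers to distinct vertices joined by a non-loop edge. $A(G)$ is the $V(G)\times V(G)$ matrix over $GF(2)$ with diagonal entry $1$ exactly at looped vertices and off-diagonal entry $1$ exactly for adjacent pairs. $IAS(G)=(I\mid A(G)\mid A(G)+I)$ over $GF(2)$, rows indexed by $V(G)$; the $v$-columns of the three blocks are labelled $\phi_G(v),\chi_G(v),\psi_G(v)$. $M[IAS(G)]$ is the binary column matroid of $IAS(G)$ on $W(G)=\{\phi_G(v),\chi_G(v),\psi_G(v):v\in V(G)\}$; the vertex triple of $v$ is $\{\phi_G(v),\chi_G(v),\psi_G(v)\}$, and a transversal contains exactly one element of each vertex triple. For a binary matroid on a set $E$, identify subsets of $E$ with vectors in $GF(2)^E$: the cycle space is the span of the circuits (equivalently, for any $GF(2)$-representation, the set of vectors orthogonal to every row), the cocycle space is the span of the cocircuits (the orthogonal complement of the cycle space), and the bicycle space is the intersection of the cycle space and the cocycle space.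 *)

From HB Require Import structures.
From mathcomp Require Import all_boot all_order all_algebra.
Set Implicit Arguments. Unset Strict Implicit. Unset Printing Implicit Defensive.
Import GRing.Theory.
Local Open Scope ring_scope.

(* Looped simple graph on vertex set 'I_n: loop marks looped vertices,
   adj is the (symmetric, irreflexive) adjacency relation between distinct
   vertices. *)
Definition looped_simple_graph (n : nat) (loop : pred 'I_n) (adj : rel 'I_n) : Prop :=
  symmetric adj /\ irreflexive adj.

Definition adjmx (n : nat) (loop : pred 'I_n) (adj : rel 'I_n) : 'M['F_2]_n :=
  \matrix_(i, j) (if i == j then (loop i)%:R else (adj i j)%:R).

(* W(G) = V(G) x {phi, chi, psi}; (v,0) = phi(v), (v,1) = chi(v), (v,2) = psi(v). *)
Definition welt (n : nat) := ('I_n * 'I_3)%type.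

Definition ias_col (n : nat) (loop : pred 'I_n) (adj : rel 'I_n) (w : welt n)
  : 'cV['F_2]_n :=
  let A := adjmx loop adj in
  if val w.2 == 0%N then col w.1 (1%:M : 'M['F_2]_n)
  else if val w.2 == 1%N then col w.1 A
  else col w.1 (A + 1%:M).

Definition ias_rank (n : nat) (loop : pred 'I_n) (adj : rel 'I_n) (T : {set welt n})
  : nat :=
  \rank (\sum_(w in T) <<trmx (ias_col loop adj w)>>)%MS.

Definition vtriple (n : nat) (v : 'I_n) : {set welt n} := [set w | w.1 == v].

Definition ias_transversal (n : nat) (T : {set welt n}) : Prop :=
  forall v : 'I_n, #|T :&: vtriple v| = 1%N.

Definition trans_elt (n : nat) (T : {set welt n}) (v : 'I_n) : welt n :=
  odflt (v, ord0) [pick w in T | w.1 == v].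

(* GF(2)-representation of M_T: the binary matroid on V(G) obtained from
   M[IAS(G)]|T via the bijection T -> V(G); column v is the IAS column of
   the element of T in the vertex triple of v. *)
Definition restr_mx (n : nat) (loop : pred 'I_n) (adj : rel 'I_n) (T : {set welt n})
  : 'M['F_2]_n :=
  \matrix_(i, j) ias_col loop adj (trans_elt T j) i ord0.

(* Spaces of the binary matroid represented by R (columns indexed by V),
   subsets of V identified with vectors in GF(2)^V (row vectors). *)
Definition cycle_space (n : nat) (R : 'M['F_2]_n) (x : 'rV['F_2]_n) : Prop :=
  R *m x^T = 0.

Definition cocycle_space (n : nat) (R : 'M['F_2]_n) (y : 'rV['F_2]_n) : Prop :=
  forall x : 'rV['F_2]_n, cycle_space R x -> x *m y^T = 0.

Definition bicycle_space (n : nat) (R : 'M['F_2]_n) (y : 'rV['F_2]_n) : Prop :=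
  cycle_space R y /\ cocycle_space R y.

From HB Require Import structures.
From mathcomp Require Import all_boot all_order all_algebra.
From mathcomp Require Import zify.
Set Implicit Arguments. Unset Strict Implicit. Unset Printing Implicit Defensive.
Import GRing.Theory.
Local Open Scope ring_scope.

(* If the element of a transversal T at v has type k in {phi, chi, psi}, the
   column of M_T at v is d_k e_v + a_k A e_v, where (d_k, a_k) runs over the
   three nonzero vectors (1,0), (0,1), (1,1) of GF(2)^2.  So M_T is
   represented by D_T + A E_T with D_T, E_T diagonal.  For transversals T, S
   with different types at every vertex, d_t a_s - a_t d_s = 1 at every
   vertex, and the symmetry of A makes the cycle spaces of M_T and M_S
   orthogonal.  When r(T1) + r(T2) = |V| these cycle spaces have
   complementary dimensions, so each is the cocycle space of the other;
   hence the bicycle spaces of M_1 and M_2 are both the intersection of the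
   two cycle spaces.  Finally D_3 + A E_3 is the sum of the representations
   of M_1 and M_2, and the cycle space of M_3 is orthogonal to those of M_1
   and M_2, which pins it down as that same intersection. *)

Section Annihilator.
Variables (F : fieldType) (n : nat).

Lemma mulmx_tr_eq0 m (R : 'M[F]_(m, n)) (x : 'rV_n) :
  (R *m x^T == 0) = (x <= kermx R^T)%MS.
Proof. by rewrite sub_kermx -(inj_eq trmx_inj) trmx_mul trmxK trmx0. Qed.

Lemma kermx_tr_rows m (K : 'M[F]_(m, n)) (z : 'rV_n) :
  (forall j, row j K *m z^T = 0) -> (z <= kermx K^T)%MS.
Proof.
by move=> Kz; rewrite -mulmx_tr_eq0; apply/eqP/row_matrixP => j; rewrite row_mul row0 Kz.
Qed.

Lemma kermx_annihilator m1 m2 (R1 : 'M[F]_(m1, n)) (R2 : 'M[F]_(m2, n)) :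
  (forall x y : 'rV_n, R1 *m x^T = 0 -> R2 *m y^T = 0 -> x *m y^T = 0) ->
  (\rank R1 + \rank R2 = n)%N ->
  forall y : 'rV_n, (forall x : 'rV_n, R1 *m x^T = 0 -> x *m y^T = 0) -> R2 *m y^T = 0.
Proof.
move=> orth rk y y_perp; set K1 := kermx R1^T; set K2 := kermx R2^T.
have K1_ker j : R1 *m (row j K1)^T = 0 by apply/eqP; rewrite mulmx_tr_eq0 row_sub.
have K2_perp : (K2 <= kermx K1^T)%MS.
  apply/row_subP => i; apply: kermx_tr_rows => j; apply: orth (K1_ker j) _.
  by apply/eqP; rewrite mulmx_tr_eq0 row_sub.
have rk_eq : \rank (kermx K1^T) = \rank K2.
  rewrite !mxrank_ker !mxrank_tr mxrank_ker mxrank_tr.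
  by have := rank_leq_row R1; lia.
have perpK1_sub : (kermx K1^T <= K2)%MS.
  by have [_] := mxrank_leqif_sup K2_perp; rewrite rk_eq eqxx => <-.
apply/eqP; rewrite mulmx_tr_eq0; apply: submx_trans perpK1_sub.
by apply: kermx_tr_rows => j; apply: y_perp.
Qed.

End Annihilator.

Lemma diag_sym_kernels_orthogonal (R : comNzRingType) n (B : 'M[R]_n)
    (dt et ds es x y : 'rV[R]_n) :
  B^T = B -> (forall j, dt 0 j * es 0 j - et 0 j * ds 0 j = 1) ->
  (diag_mx dt + B *m diag_mx et) *m x^T = 0 ->
  (diag_mx ds + B *m diag_mx es) *m y^T = 0 -> x *m y^T = 0.
Proof.
move=> symB det cx cy.
have Dx : x *m diag_mx dt = - (x *m diag_mx et *m B).
  apply: trmx_inj; move/eqP: cx; rewrite mulmxDl addr_eq0 => /eqP cx.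
  by rewrite raddfN /= !trmx_mul !tr_diag_mx symB mulmxA cx.
have Dy : diag_mx ds *m y^T = - (B *m diag_mx es *m y^T).
  by move/eqP: cy; rewrite mulmxDl addr_eq0 => /eqP.
have unimodular : diag_mx dt *m diag_mx es - diag_mx et *m diag_mx ds = 1%:M.
  rewrite !mulmx_diag -raddfB /= -diag_const_mx; congr diag_mx.
  by apply/matrixP => i j; rewrite !mxE det.
(* Both terms of x (D_t E_s - E_t D_s) y^T become x E_t B E_s y^T (up to sign). *)
rewrite -[x]mulmx1 -unimodular mulmxBr mulmxBl !mulmxA Dx -!mulmxA Dy.
by rewrite mulNmx !mulmxN opprK !mulmxA addNr.
Qed.

Section BinarySpaces.
Variable n : nat.
Implicit Types R : 'M['F_2]_n.

Lemma cocycle_space_sym R1 R2 :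
  (forall y, cycle_space R2 y -> cocycle_space R1 y) ->
  forall y, cycle_space R1 y -> cocycle_space R2 y.
Proof.
move=> orth y cy x cx.
by rewrite -[LHS]trmxK trmx_mul trmxK (orth x cx y cy) trmx0.
Qed.

Lemma cocycle_space_complement R1 R2 :
  (forall y, cycle_space R2 y -> cocycle_space R1 y) ->
  (\rank R1 + \rank R2 = n)%N ->
  forall y, cocycle_space R1 y <-> cycle_space R2 y.
Proof.
move=> orth rk y; split; last exact: orth.
by apply: kermx_annihilator rk y => x z cx cz; apply: orth.
Qed.

End BinarySpaces.

Section Transversals.
Variable n : nat.
Implicit Types T : {set welt n}.

Definition trans_type T (v : 'I_n) : 'I_3 := (trans_elt T v).2.

Lemma trans_elt_in T : ias_transversal T -> forall v, trans_elt T v \in T.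
Proof.
move=> trT v; rewrite /trans_elt; case: pickP => [w /andP[] //|none].
have /eqP/cards1P[u Tv] := trT v.
have : u \in T :&: vtriple v by rewrite Tv set11.
by rewrite !inE none.
Qed.

Lemma trans_eltE T : ias_transversal T -> forall v, trans_elt T v = (v, trans_type T v).
Proof.
move=> trT v; rewrite /trans_type /trans_elt; case: pickP => [w /andP[_ /eqP <-]|none].
  exact: surjective_pairing.
by have := trans_elt_in trT v; rewrite /trans_elt; case: pickP => // w /andP[]; rewrite none.
Qed.

Lemma mem_transversal T : ias_transversal T -> forall w, (w \in T) = (w.2 == trans_type T w.1).
Proof.
move=> trT [v k] /=; have := trans_elt_in trT v; rewrite trans_eltE // => tT.
apply/idP/eqP => [wT|->] //; have /eqP/cards1P[u Tv] := trT v.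
have : (v, k) \in T :&: vtriple v by rewrite !inE wT /=.
have : (v, trans_type T v) \in T :&: vtriple v by rewrite !inE tT /=.
by rewrite Tv !inE => /eqP <- /eqP [->].
Qed.

Lemma trans_type_disjoint T T' :
  ias_transversal T -> ias_transversal T' -> [disjoint T & T'] ->
  forall v, trans_type T v != trans_type T' v.
Proof.
move=> trT trT' dis v; apply/eqP => same.
have := disjointFr dis (trans_elt_in trT v).
by rewrite trans_eltE // same -trans_eltE // trans_elt_in.
Qed.

Lemma card_vtriple (v : 'I_n) : #|vtriple v| = 3%N.
Proof.
have -> : vtriple v = [set (v, k) | k : 'I_3].
  apply/setP => -[u k]; rewrite inE /=.
  by apply/eqP/imsetP => [-> | [k' _ [-> _]]] //; exists k.
by rewrite card_imset ?card_ord // => k k' [].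
Qed.

Lemma transversal_setC T1 T2 :
  ias_transversal T1 -> ias_transversal T2 -> [disjoint T1 & T2] ->
  ias_transversal (~: (T1 :|: T2)).
Proof.
move=> tr1 tr2 dis v.
have Tv T : ias_transversal T -> T :&: vtriple v = [set trans_elt T v].
  move=> trT; have /eqP/cards1P[u Tu] := trT v.
  have : trans_elt T v \in T :&: vtriple v by rewrite inE trans_elt_in //= inE trans_eltE.
  by rewrite Tu inE => /eqP ->.
rewrite setIC -setDE cardsD setIUr setIC (Tv _ tr1) setIC (Tv _ tr2) cards2.
by rewrite !trans_eltE // xpair_eqE eqxx trans_type_disjoint // card_vtriple.
Qed.

End Transversals.

Section IASRepresentation.
Variables (n : nat) (loop : pred 'I_n) (adj : rel 'I_n).
Local Notation A := (adjmx loop adj).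

Definition id_coef (k : 'I_3) : 'F_2 := if val k == 1%N then 0 else 1.
Definition adj_coef (k : 'I_3) : 'F_2 := if val k == 0%N then 0 else 1.

Lemma coef_det a b : a != b -> id_coef a * adj_coef b - adj_coef a * id_coef b = 1.
Proof.
by case: a b => [[|[|[|a]]] ?] [[|[|[|b]]] ?] //= _; apply: val_inj; vm_compute.
Qed.

Lemma coef_third a b c : a != b -> b != c -> a != c ->
  id_coef c = id_coef a + id_coef b /\ adj_coef c = adj_coef a + adj_coef b.
Proof.
by case: a b c => [[|[|[|a]]] ?] [[|[|[|b]]] ?] [[|[|[|c]]] ?] //= _ _ _;
  split; apply: val_inj; vm_compute.
Qed.

Definition ias_mx (t : 'I_n -> 'I_3) : 'M['F_2]_n :=
  diag_mx (\row_j id_coef (t j)) + A *m diag_mx (\row_j adj_coef (t j)).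

Lemma ias_colE v k i :
  ias_col loop adj (v, k) i ord0 = id_coef k * (i == v)%:R + adj_coef k * A i v.
Proof.
rewrite /ias_col /id_coef /adj_coef /=.
case: k => [[|[|[|k]]] ?] //=; rewrite !mxE /=.
- by rewrite mul1r mul0r addr0.
- by rewrite mul0r mul1r add0r.
- by rewrite !mul1r addrC.
Qed.

Lemma restr_mx_type T : ias_transversal T -> restr_mx loop adj T = ias_mx (trans_type T).
Proof.
move=> trT; apply/matrixP => i j.
rewrite /restr_mx /ias_mx mul_mx_diag !mxE trans_eltE // ias_colE /adjmx !mxE.
case: eqVneq => [->|_]; first by rewrite mulr1 [_ * adj_coef _]mulrC.
by rewrite mulr0 mulr0n !add0r mulrC.
Qed.

Lemma ias_rank_transversal T : ias_transversal T ->
  ias_rank loop adj T = \rank (restr_mx loop adj T).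
Proof.
move=> trT; rewrite /ias_rank -(mxrank_tr (restr_mx loop adj T)).
have rowT v : row v (restr_mx loop adj T)^T = (ias_col loop adj (trans_elt T v))^T.
  by apply/matrixP => a b; rewrite !mxE (ord1 a).
apply/eqP; rewrite eqn_leq; apply/andP; split; apply: mxrankS.
  apply/sumsmx_subP => w wT; rewrite genmxE.
  have -> : w = trans_elt T w.1.
    by rewrite mem_transversal // in wT; rewrite trans_eltE // -(eqP wT) -surjective_pairing.
  by rewrite -rowT row_sub.
apply/row_subP => v; rewrite rowT.
by apply: (sumsmx_sup (trans_elt T v)); rewrite ?genmxE ?trans_elt_in.
Qed.

Lemma adjmx_sym : looped_simple_graph loop adj -> A^T = A.
Proof.
move=> [adj_sym _]; apply/matrixP => i j; rewrite !mxE eq_sym.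
by case: eqVneq => [->|_] //; rewrite adj_sym.
Qed.

Lemma ias_mx_orthogonal (t s : 'I_n -> 'I_3) :
  looped_simple_graph loop adj -> (forall v, t v != s v) ->
  forall y, cycle_space (ias_mx s) y -> cocycle_space (ias_mx t) y.
Proof.
move=> G ts y cy x cx.
by apply: diag_sym_kernels_orthogonal (adjmx_sym G) _ cx cy => j; rewrite !mxE coef_det.
Qed.

Lemma ias_mx_third (t1 t2 t3 : 'I_n -> 'I_3) :
  (forall v, [/\ t1 v != t2 v, t2 v != t3 v & t1 v != t3 v]) ->
  ias_mx t3 = ias_mx t1 + ias_mx t2.
Proof.
move=> distinct.
have Ed : \row_j id_coef (t3 j) = \row_j id_coef (t1 j) + \row_j id_coef (t2 j).
  apply/matrixP => i j; rewrite !mxE.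
  by have [a b c] := distinct j; have [-> _] := coef_third a b c.
have Ea : \row_j adj_coef (t3 j) = \row_j adj_coef (t1 j) + \row_j adj_coef (t2 j).
  apply/matrixP => i j; rewrite !mxE.
  by have [a b c] := distinct j; have [_ ->] := coef_third a b c.
by rewrite /ias_mx Ed Ea !raddfD /= addrACA.
Qed.

End IASRepresentation.

Theorem corollary5p4 (n : nat) (loop : pred 'I_n) (adj : rel 'I_n)
  (T1 T2 : {set welt n}) :
  looped_simple_graph loop adj ->
  ias_transversal T1 -> ias_transversal T2 -> [disjoint T1 & T2] ->
  (ias_rank loop adj T1 + ias_rank loop adj T2 = n)%N ->
  let T3 := ~: (T1 :|: T2) in
  (forall y : 'rV['F_2]_n,
     bicycle_space (restr_mx loop adj T1) y <-> bicycle_space (restr_mx loop adj T2) y) /\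
  (forall y : 'rV['F_2]_n,
     bicycle_space (restr_mx loop adj T1) y <-> cycle_space (restr_mx loop adj T3) y).
Proof.
move=> G tr1 tr2 dis12 rk T3.
have tr3 : ias_transversal T3 by apply: transversal_setC.
have dis13 : [disjoint T1 & T3] by rewrite /T3 disjoints_subset setCK subsetUl.
have dis23 : [disjoint T2 & T3] by rewrite /T3 disjoints_subset setCK subsetUr.
rewrite !ias_rank_transversal // !restr_mx_type // in rk.
rewrite /bicycle_space !restr_mx_type //.
have o12 := ias_mx_orthogonal G (trans_type_disjoint tr1 tr2 dis12).
have o13 := ias_mx_orthogonal G (trans_type_disjoint tr1 tr3 dis13).
have o23 := ias_mx_orthogonal G (trans_type_disjoint tr2 tr3 dis23).
have co1 := cocycle_space_complement o12 rk.
have co2 := cocycle_space_complement (cocycle_space_sym o12) (etrans (addnC _ _) rk).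
have M3 : ias_mx loop adj (trans_type T3)
          = ias_mx loop adj (trans_type T1) + ias_mx loop adj (trans_type T2).
  by apply: ias_mx_third => v; rewrite !trans_type_disjoint.
split=> y; split.
- by case=> c1 /co1 c2; split; last exact/co2.
- by case=> c2 /co2 c1; split; last exact/co1.
- by case=> c1 /co1 c2; rewrite /cycle_space M3 mulmxDl c1 c2 addr0.
- move=> c3; have c1 := (co2 y).1 (o23 y c3); have c2 := (co1 y).1 (o13 y c3).
  by split; last exact/co1.
Qed.
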